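(* Let $n\ge 2$ and $\rho>0$, and let each channel gain $|h_i|^2$, $i=1,\dots,n$, be exponentially distributed with mean $1$ (Rayleigh fading). Then the best-case zero-outage capacity $\overline{R^{0}}(\rho)=\log_2(1+\rho\,\phi(0))$ satisfies $$\overline{R^{0}}(\rho)\le\log_2\bigl(1+\rho\, n\log(n)\bigr).$$
   Context: Here $G(x)=-\log(1-x)$ is the quantile of the $\mathrm{Exp}(1)$ distribution (natural logarithm). Define $H_0(x)=(n-1)G((n-1)x)+G(1-x)=-(n-1)\log(1-(n-1)x)-\log(x)$, $c_n(0)=\min\{c\in[0,\tfrac1n]: \int_c^{1/n}H_0(t)\,dt\ge(\tfrac1n-c)H_0(c)\}$, and $\phi(0)=H_0(c_n(0))$ if $c_n(0)>0$, $\phi(0)=n$ if $c_n(0)=0$. The quantity $\log_2(1+\rho\phi(0))$ is the best-case (over joint distributions with these marginals) zero-outage capacity without CSI at the transmitter. *)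

From HB Require Import structures.
From mathcomp Require Import all_boot all_order all_algebra.
From mathcomp Require Import all_classical all_reals all_analysis.
Set Implicit Arguments. Unset Strict Implicit. Unset Printing Implicit Defensive.
Import Order.TTheory GRing.Theory Num.Theory.
Import numFieldNormedType.Exports.
Local Open Scope classical_set_scope.
Local Open Scope ring_scope.

(* Quantile of Exp(1): G(x) = -log(1-x) (natural log). *)
Definition Gq {R : realType} (x : R) : R := - ln (1 - x).

Definition H0r {R : realType} (n : nat) (x : R) : R :=
  (n.-1)%:R * Gq ((n.-1)%:R * x) + Gq (1 - x).

(* H_0 valued in extended reals: H_0(0) = -log 0 = +oo (mathematical value);
   for x > 0 it is the real value above. *)
Definition H0 {R : realType} (n : nat) (x : R) : \bar R :=
  if x == 0 then +oo%E else (H0r n x)%:E.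

Definition cn0_cond {R : realType} (n : nat) (c : R) : Prop :=
  (((n%:R^-1 - c)%R)%:E * H0 n c <=
     \int[@lebesgue_measure R]_(t in `[c, (n%:R^-1)%R]) H0 n t)%E.

Definition is_cn0 {R : realType} (n : nat) (c : R) : Prop :=
  [/\ 0 <= c, c <= n%:R^-1, cn0_cond n c &
      forall c' : R, 0 <= c' -> c' <= n%:R^-1 -> cn0_cond n c' -> c <= c'].

Definition phi0 {R : realType} (n : nat) (c : R) : R :=
  if 0 < c then H0r n c else n%:R.

Definition log2 {R : realType} (x : R) : R := ln x / ln 2.

From HB Require Import structures.
From mathcomp Require Import all_boot all_order all_algebra.
From mathcomp Require Import all_classical all_reals all_analysis.
From mathcomp Require Import ring lra measurable_realfun.
Import Order.TTheory GRing.Theory Num.Theory.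
Import numFieldNormedType.Exports.
Set Implicit Arguments.
Unset Strict Implicit.
Unset Printing Implicit Defensive.
Local Open Scope classical_set_scope.
Local Open Scope ring_scope.

(* Near 0, H_0(t) <= (n-1) log n - log t, which is integrable: so the defining
   inequality of c_n(0) fails at c = 0, where its left side is +oo. Hence
   c := c_n(0) > 0 and phi(0) = H_0(c); this matters, as n > n log n for n = 2.
   Since log is concave, H_0 is convex on (0, 1/n]; if H_0(c) exceeded
   H_0(1/n), the mean of H_0 over [c, 1/n] would be strictly smaller than
   H_0(c), contradicting the defining inequality. So phi(0) <= H_0(1/n) = n log n,
   and log_2 (1 + rho x) is increasing in x. *)

Lemma concave_ln_comb {R : realType} (a b s : R) : 0 < a -> 0 < b ->
  0 <= s -> s <= 1 -> (1 - s) * ln a + s * ln b <= ln ((1 - s) * a + s * b).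
Proof.
move=> a0 b0 s0 s1; have := concave_ln (Itv01 s0 s1) b0 a0.
by rewrite !convRE /= addrC [_ * b + _]addrC.
Qed.

Lemma ler_log2 {R : realType} (x y : R) : 0 < x -> x <= y -> log2 x <= log2 y.
Proof.
move=> x0 xy; rewrite /log2 ler_wpM2r ?invr_ge0 ?ln_ge0 ?ler1n //.
by rewrite ler_ln ?posrE // (lt_le_trans x0).
Qed.

Section H0r_properties.
Variables (R : realType) (n : nat).
Hypothesis n_gt0 : (0 < n)%N.
Local Notation k := ((n.-1)%:R : R).

Lemma H0rE (x : R) : H0r n x = - (k * ln (1 - k * x)) - ln x.
Proof. by rewrite /H0r /Gq subKr mulrN. Qed.

Let natr_predS : n%:R = k + 1 :> R.
Proof. by rewrite natr1 prednK. Qed.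

Let k_ge0 : 0 <= k. Proof. exact: ler0n. Qed.

Let mulr_le1 (x : R) : x <= n%:R^-1 -> k * x + x <= 1.
Proof.
move=> xn; have n0 : 0 < n%:R :> R by rewrite ltr0n.
by have := ler_wpM2l (ltW n0) xn; rewrite mulfV ?gt_eqF // natr_predS; lra.
Qed.

Let kx_ge0 (x : R) : 0 < x -> 0 <= k * x.
Proof. by move=> x0; exact: mulr_ge0 k_ge0 (ltW x0). Qed.

Lemma H0r_convex (c e s : R) : 0 < c -> 0 < e ->
  0 < 1 - k * c -> 0 < 1 - k * e -> 0 <= s -> s <= 1 ->
  H0r n ((1 - s) * c + s * e) <= (1 - s) * H0r n c + s * H0r n e.
Proof.
rewrite !H0rE => c0 e0 kc ke s0 s1.
have := concave_ln_comb kc ke s0 s1.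
have := concave_ln_comb c0 e0 s0 s1.
have -> : 1 - k * ((1 - s) * c + s * e) = (1 - s) * (1 - k * c) + s * (1 - k * e)
  by ring.
move=> h2 /(ler_wpM2l k_ge0) h1; lra.
Qed.

Lemma H0r_ge0 (x : R) : 0 < x -> x <= n%:R^-1 -> 0 <= H0r n x.
Proof.
move=> x0 /mulr_le1 xn; have kx := kx_ge0 x0; rewrite H0rE.
have l1 : ln (1 - k * x) <= 0 by apply: ln_le0; lra.
have l2 : ln x <= 0 by apply: ln_le0; lra.
by have := mulr_ge0_le0 k_ge0 l1; lra.
Qed.

Lemma H0r_le (x : R) : 0 < x -> x <= n%:R^-1 ->
  H0r n x <= k * ln n%:R - ln x.
Proof.
move=> x0 /mulr_le1 xn; have kx := kx_ge0 x0; rewrite H0rE.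
suff /(ler_wpM2l k_ge0) : - ln n%:R <= ln (1 - k * x) by lra.
rewrite -lnV ?posrE ?ltr0n // ler_ln ?posrE ?invr_gt0 ?ltr0n //; last lra.
by rewrite natr_predS -div1r ler_pdivrMr; have := k_ge0; nra.
Qed.

Lemma H0r_invn : H0r n n%:R^-1 = n%:R * ln (n%:R : R).
Proof.
rewrite H0rE natr_predS; have k0 := k_ge0.
have -> : 1 - k * (k + 1)^-1 = (k + 1)^-1 by field; lra.
by rewrite lnV ?posrE; [ring | lra].
Qed.

Lemma H0r_chord (c e t : R) : 0 < c -> c < e -> e <= n%:R^-1 -> c <= t <= e ->
  H0r n t <= H0r n c - (t - c) / (e - c) * (H0r n c - H0r n e).
Proof.
move=> c0 ce en /andP[ct te].
set s := (t - c) / (e - c).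
have s0 : 0 <= s by apply: divr_ge0; lra.
have s1 : s <= 1 by rewrite ler_pdivrMr; lra.
have tE : t = (1 - s) * c + s * e by rewrite /s; field; lra.
have kc : 0 < 1 - k * c by have := mulr_le1 (le_trans (ltW ce) en); lra.
have ke : 0 < 1 - k * e by have := mulr_le1 en; lra.
by have := H0r_convex c0 (lt_trans c0 ce) kc ke s0 s1; rewrite -tE; lra.
Qed.

End H0r_properties.

Lemma measurable_H0r {R : realType} (n : nat) : measurable_fun setT (H0r n : R -> R).
Proof.
rewrite /H0r /Gq; under eq_fun do rewrite subKr.
apply: measurable_funD; last by apply: measurableT_comp.
apply: measurable_funM => //; apply: measurableT_comp => //.
apply: measurableT_comp; first exact: measurable_ln.
exact: measurable_funB.
Qed.

Lemma H0E {R : realType} (n : nat) (t : R) : 0 < t -> H0 n t = (H0r n t)%:E.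
Proof. by move=> t0; rewrite /H0 gt_eqF. Qed.

Lemma measurable_H0 {R : realType} (n : nat) (D : set R) : measurable D ->
  (forall t, D t -> 0 < t) -> measurable_fun D (H0 n).
Proof.
move=> mD Dpos; apply: (eq_measurable_fun (EFin \o H0r n)).
  by move=> t /set_mem Dt; rewrite /= H0E ?Dpos.
by apply/measurable_EFinP; apply: measurable_funS (measurable_H0r n).
Qed.

Section integral_bounds.
Variable R : realType.
Local Notation mu := (@lebesgue_measure R).
Local Open Scope ereal_scope.

Lemma ge0_integral_le_cst (D : set R) (f : R -> R) (C : R) : measurable D ->
  measurable_fun D f -> (forall t, D t -> (0 <= f t <= C)%R) ->
  \int[mu]_(t in D) (f t)%:E <= C%:E * mu D.
Proof.
move=> mD mf fC; rewrite -integral_cst //; apply: ge0_le_integral => //.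
- by move=> t /fC /andP[f0 _]; rewrite lee_fin.
- exact/measurable_EFinP.
- by move=> t /fC /andP[_ ftC]; rewrite lee_fin.
Qed.

(* By the chord bound, f <= f c on the left half of [c, e] and
   f <= (f c + f e) / 2 < f c on the right half. *)
Lemma integral_lt_of_chord (f : R -> R) (c e : R) : (c < e)%R ->
  measurable_fun `[c, e] f -> (forall t, (c <= t <= e)%R -> (0 <= f t)%R) ->
  (forall t, (c <= t <= e)%R -> (f t <= f c - (t - c) / (e - c) * (f c - f e))%R) ->
  (f e < f c)%R ->
  \int[mu]_(t in `[c, e]) (f t)%:E < ((e - c) * f c)%:E.
Proof.
move=> ce mf f0 chord fec.
set m := ((c + e) / 2)%R.
have cm : (c < m)%R by rewrite /m; lra.
have me : (m < e)%R by rewrite /m; lra.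
have ec0 : (0 < e - c)%R by lra.
have cme : [set` `[c, e]] = [set` `[c, m]] `|` [set` `]m, e]].
  by rewrite (@itv_bndbnd_setU _ _ (BLeft c) (BRight m) (BRight e)) ?bnd_simp ?ltW.
have mf1 : measurable_fun `[c, m] f.
  by apply: measurable_funS mf => // t /=; rewrite !in_itv /=; lra.
have mf2 : measurable_fun `]m, e] f.
  by apply: measurable_funS mf => // t /=; rewrite !in_itv /=; lra.
have I1 : \int[mu]_(t in `[c, m]) (f t)%:E <= (f c * (m - c))%:E.
  apply: le_trans (@ge0_integral_le_cst _ _ (f c) _ mf1 _) _ => //.
    move=> t /=; rewrite in_itv /= => /andP[ct tm].
    have cte : (c <= t <= e)%R by rewrite ct (le_trans tm (ltW me)).
    have : (0 <= (t - c) / (e - c) * (f c - f e))%R.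
      by apply: mulr_ge0; [apply: divr_ge0|]; lra.
    by have := chord t cte; rewrite f0 //=; lra.
  by rewrite lebesgue_measure_itv /= lte_fin cm -EFinD -EFinM.
have I2 : \int[mu]_(t in `]m, e]) (f t)%:E <= ((f c + f e) / 2 * (e - m))%:E.
  apply: le_trans (@ge0_integral_le_cst _ _ ((f c + f e) / 2) _ mf2 _) _ => //.
    move=> t /=; rewrite in_itv /= => /andP[mt te].
    have ct : (c <= t)%R by lra.
    rewrite f0 ?ct ?te //=.
    have half : (2^-1 <= (t - c) / (e - c))%R.
      by rewrite ler_pdivlMr // /m in mt *; lra.
    have := ler_wpM2r (_ : (0 <= f c - f e)%R) half.
    have := chord t; rewrite ct te => /(_ isT); lra.
  by rewrite lebesgue_measure_itv /= lte_fin me -EFinD -EFinM.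
rewrite cme ge0_integral_setU //; first last.
- rewrite disj_set2E; apply/eqP/seteqP; split => // t /=.
  by rewrite !in_itv /=; lra.
- by move=> t; rewrite -cme /= in_itv /= => ?; rewrite lee_fin f0.
- by rewrite -cme; apply/measurable_EFinP.
apply: le_lt_trans (leeD I1 I2) _; rewrite -EFinD lte_fin /m.
nra.
Qed.

End integral_bounds.

Section antiderivative_ln.
Variable R : realType.
Local Notation mu := (@lebesgue_measure R).

Let F (K : R) : R -> R := (K \*: id) + id - id * (@ln R).

Let FE (K x : R) : F K x = K * x + x - x * ln x.
Proof. by []. Qed.

Let is_derive_F (K x : R) : 0 < x -> is_derive x 1 (F K) (K - ln x).
Proof.
move=> x0; have dln := is_derive1_ln x0; apply: is_derive_eq.
by rewrite /= /GRing.scale /= !mulr1 mulfV ?gt_eqF //; ring.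
Qed.

Let continuous_F (K x : R) : 0 < x -> {for x, continuous (F K)}.
Proof.
move=> x0; apply: differentiable_continuous; apply/derivable1_diffP.
by have dF := is_derive_F K x0; exact: ex_derive.
Qed.

Lemma integral_sub_ln (K a b : R) : 0 < a -> a < b ->
  (\int[mu]_(x in `[a, b]) (K - ln x)%:E =
   (K * b + b - b * ln b)%:E - (K * a + a - a * ln a)%:E)%E.
Proof.
move=> a0 ab; rewrite -!FE.
have pos x : x \in `]a, b[ -> 0 < x.
  by rewrite in_itv /= => /andP[ax _]; exact: lt_trans ax.
apply: continuous_FTC2 => //.
- apply: continuous_in_subspaceT => x; rewrite inE /= in_itv /= => /andP[ax _].
  apply: (continuousB (f := cst K)); first exact: cst_continuous.
  exact/continuous_ln/(lt_le_trans a0 ax).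
- split.
  + by move=> x /pos x0; have dF := is_derive_F K x0; exact: ex_derive.
  + exact/cvg_at_right_filter/continuous_F.
  + exact/cvg_at_left_filter/continuous_F/(lt_trans a0 ab).
- by move=> x /pos x0; have dF := is_derive_F K x0; rewrite derive1E derive_val.
Qed.

End antiderivative_ln.

Section improper_integral.
Variable R : realType.
Local Notation mu := (@lebesgue_measure R).
Local Open Scope ereal_scope.

Lemma ge0_integral_itv_obnd_le (f : R -> \bar R) (a b : R) (B : \bar R) :
  (a < b)%R -> measurable_fun `]a, b] f -> (forall t, (a < t <= b)%R -> 0 <= f t) ->
  (forall x, (a < x < b)%R -> \int[mu]_(t in `[x, b]) f t <= B) ->
  \int[mu]_(t in `]a, b]) f t <= B.
Proof.
move=> ab mf f0 fB.
have ba : (0 < b - a)%R by rewrite subr_gt0.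
pose x_ (k : nat) := (a + (b - a) / k.+2%:R)%R.
pose F k := [set` `[x_ k, b]].
have k2 (k : nat) : (0 < k.+2%:R :> R)%R by rewrite ltr0n.
have xa k : (a < x_ k)%R by rewrite /x_ ltrDl divr_gt0.
have xb k : (x_ k < b)%R.
  by rewrite /x_ -ltrBrDl ltr_pdivrMr // ltr_pMr // ltr1n.
have FU : [set` `]a, b]] = \bigcup_k F k.
  apply/seteqP; split => t /=.
    rewrite in_itv /= => /andP[ta tb].
    exists (Num.truncn ((b - a) / (t - a))) => //=.
    rewrite /F /= in_itv /= tb andbT /x_ -lerBrDl.
    have := truncnS_gt ((b - a) / (t - a)).
    set N := Num.truncn _; rewrite ltr_pdivrMr ?subr_gt0 // ler_pdivrMr //.
    rewrite -[N.+2%:R]natr1; lra.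
  by move=> [k _]; rewrite /F /= !in_itv /= => /andP[/(lt_le_trans (xa k)) -> ->].
have nd : nondecreasing_seq F.
  move=> i j ij; rewrite subsetEset => t; rewrite /F /= !in_itv /= => /andP[xt ->].
  rewrite andbT (le_trans _ xt) // lerD2l; apply: ler_wpM2l; first exact: ltW.
  by rewrite lef_pV2 ?posrE // ler_nat !ltnS.
have FS k : F k `<=` [set` `]a, b]] by rewrite FU; exact: bigcup_sup.
have mF k : measurable (F k) by exact: measurable_itv.
have mfF k : measurable_fun (F k) f by exact: measurable_funS mf.
have f0F k t : F k t -> 0 <= f t by move=> /(FS k) /=; rewrite in_itv /=; exact: f0.
have cv := ge0_nondecreasing_set_cvg_integral nd mF mfF f0F (mu := mu).
rewrite FU -(cvg_lim _ cv) //; apply: lime_le; first by apply/cvg_ex; eexists; exact: cv.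
by apply: nearW => k; apply: fB; rewrite xa xb.
Qed.

End improper_integral.

Section cn0.
Variables (R : realType) (n : nat).
Hypothesis n_gt0 : (0 < n)%N.
Local Notation mu := (@lebesgue_measure R).
Local Notation e := (n%:R^-1 : R).

Let e_gt0 : 0 < e. Proof. by rewrite invr_gt0 ltr0n. Qed.

Lemma integral_H0_cbnd_le (a : R) : 0 < a -> a < e ->
  (\int[mu]_(t in `[a, e]) H0 n t <=
    ((n.-1)%:R * ln n%:R * e + e - e * ln e)%:E)%E.
Proof.
set K : R := (n.-1)%:R * ln n%:R => a0 ae.
have K0 : 0 <= K by rewrite mulr_ge0 ?ler0n // ln_ge0 // ler1n.
have pos t : `[a, e]%classic t -> 0 < t.
  by rewrite /= in_itv /= => /andP[ta _]; exact: lt_le_trans ta.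
have te t : `[a, e]%classic t -> t <= e by rewrite /= in_itv /= => /andP[].
under eq_integral => t /set_mem/pos t0 do rewrite H0E //.
apply: (@le_trans _ _ (\int[mu]_(t in `[a, e]) (K - ln t)%:E)%E).
  apply: ge0_le_integral => //.
  - by move=> t ta; rewrite lee_fin H0r_ge0 ?pos ?te.
  - by apply/measurable_EFinP; exact: measurable_funS (measurable_H0r n).
  - apply/measurable_EFinP; apply: measurable_funB => //.
    by apply: (measurable_funS (E := setT)).
  - by move=> t ta; rewrite lee_fin H0r_le ?pos ?te.
rewrite integral_sub_ln // -EFinB lee_fin.
have lna : ln a <= 0.
  by apply: ln_le0; rewrite (le_trans (ltW ae)) // invf_le1 ?ler1n ?ltr0n.
have := mulr_ge0_le0 (ltW a0) lna; have := mulr_ge0 K0 (ltW a0).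
lra.
Qed.

Lemma integral_H0_lty : (\int[mu]_(t in `[0%R, e]) H0 n t < +oo)%E.
Proof.
have pos t : `]0, e]%classic t -> 0 < t by rewrite /= in_itv /= => /andP[].
rewrite -integral_itv_obnd_cbnd; last exact: measurable_H0.
apply: le_lt_trans (ltry _); apply: ge0_integral_itv_obnd_le => //.
- exact: measurable_H0.
- by move=> t /andP[t0 te]; rewrite H0E // lee_fin H0r_ge0.
- by move=> x /andP[x0 xe]; exact: integral_H0_cbnd_le.
Qed.

Lemma not_cn0_cond0 : ~ cn0_cond n (0 : R).
Proof.
rewrite /cn0_cond /H0 eqxx subr0 gt0_muley ?lte_fin //.
by move=> /(lt_le_trans integral_H0_lty); rewrite ltxx.
Qed.

Lemma cn0_cond_H0r_le (c : R) : 0 < c -> c <= e -> cn0_cond n c ->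
  H0r n c <= H0r n e.
Proof.
move=> c0 ce cond; rewrite leNgt; apply/negP => ltec.
have {}ce : c < e.
  by rewrite lt_neqAle ce andbT; apply: contraTneq ltec => ->; rewrite ltxx.
have pos t : `[c, e]%classic t -> 0 < t.
  by rewrite /= in_itv /= => /andP[ct _]; exact: lt_le_trans ct.
move: cond; rewrite /cn0_cond H0E // -EFinM; apply/negP; rewrite -ltNge.
under eq_integral => t /set_mem/pos t0 do rewrite H0E //.
apply: integral_lt_of_chord => //.
- exact: measurable_funS (measurable_H0r n).
- by move=> t /andP[ct te]; rewrite H0r_ge0 // (lt_le_trans c0).
- by move=> t cte; exact: H0r_chord.
Qed.

Lemma is_cn0_gt0 (c : R) : is_cn0 n c -> 0 < c.
Proof.
case=> c0 _ cond _; rewrite lt_neqAle c0 andbT.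
by apply/eqP => c_eq0; apply: not_cn0_cond0; rewrite c_eq0.
Qed.

Lemma phi0_bounds (c : R) : is_cn0 n c -> 0 <= phi0 n c <= n%:R * ln n%:R.
Proof.
move=> cn; have c0 := is_cn0_gt0 cn; case: cn => _ ce cond _.
by rewrite /phi0 c0 H0r_ge0 //= -H0r_invn // cn0_cond_H0r_le.
Qed.

End cn0.

Theorem corollary2 (R : realType) (n : nat) (rho c : R) :
  (2 <= n)%N -> 0 < rho -> is_cn0 n c ->
  log2 (1 + rho * phi0 n c) <= log2 (1 + rho * (n%:R * ln (n%:R : R))).
Proof.
move=> n2 rho0 cn.
have /andP[phi0_ge0 phi0_le] := phi0_bounds (ltnW n2) cn.
apply: ler_log2; first by rewrite ltr_pwDl // mulr_ge0 // ltW.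
by rewrite lerD2l ler_wpM2l // ltW.
Qed.
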